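(* Let $G$ be a countably infinite locally finite group. For every nondecreasing function $f\colon\mathbb{R}_+\to\mathbb{R}_+$ with $\lim_{x\to\infty}f(x)=\infty$ there exists a proper left invariant metric $d_G$ on $G$ such that $f$ is not a $0$-dimensional control function of $(G,d_G)$.
   Context: A group is locally finite if every finitely generated subgroup is finite. A metric $d_G$ on $G$ is proper left invariant if $d_G(gh,gk)=d_G(h,k)$ for all $g,h,k$ and every ball contains finitely many elements. For $s>0$, an $s$-scale chain is a finite sequence $x_0,\dots,x_m$ with $d(x_i,x_{i+1})<s$; the $s$-scale connected components of $X$ are the classes of the relation ''joined by an $s$-scale chain''. A function $f$ is a $0$-dimensional control function of $(X,d)$ if for every $s>0$ every $s$-scale connected component of $X$ has diameter at most $f(s)$. *)

From Stdlib Require Import Reals List.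
Open Scope R_scope.

Record Group := {
  carrier :> Type;
  gmul : carrier -> carrier -> carrier;
  gone : carrier;
  ginv : carrier -> carrier;
  gmul_assoc : forall a b c, gmul a (gmul b c) = gmul (gmul a b) c;
  gmul_1l : forall a, gmul gone a = a;
  gmul_1r : forall a, gmul a gone = a;
  gmul_Vl : forall a, gmul (ginv a) a = gone;
  gmul_Vr : forall a, gmul a (ginv a) = gone
}.

Definition finite_set {T : Type} (P : T -> Prop) : Prop :=
  exists l : list T, forall x, P x -> In x l.

Definition countably_infinite (T : Type) : Prop :=
  exists e : nat -> T, (forall m n, e m = e n -> m = n) /\ (forall x, exists n, e n = x).

Inductive gen (G : Group) (S : list G) : G -> Prop :=
  | gen_in : forall x, In x S -> gen G S x
  | gen_one : gen G S (gone G)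
  | gen_mul : forall x y, gen G S x -> gen G S y -> gen G S (gmul G x y)
  | gen_inv : forall x, gen G S x -> gen G S (ginv G x).

Definition locally_finite (G : Group) : Prop :=
  forall S : list G, finite_set (gen G S).

Definition is_metric {X : Type} (d : X -> X -> R) : Prop :=
  (forall x y, 0 <= d x y) /\
  (forall x y, d x y = 0 <-> x = y) /\
  (forall x y, d x y = d y x) /\
  (forall x y z, d x z <= d x y + d y z).

Definition proper_left_invariant_metric (G : Group) (d : G -> G -> R) : Prop :=
  is_metric d /\
  (forall g h k, d (gmul G g h) (gmul G g k) = d h k) /\
  (forall x r, finite_set (fun y => d x y <= r)).

Inductive scale_chain {X : Type} (d : X -> X -> R) (s : R) : X -> X -> Prop :=
  | chain_refl : forall x, scale_chain d s x x
  | chain_step : forall x y z, d x y < s -> scale_chain d s y z -> scale_chain d s x z.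

(* f is a 0-dimensional control function of (X,d): for every s > 0, every
   s-scale connected component has diameter at most f s, i.e. any two points
   in the same s-scale component are at distance at most f s. *)
Definition zero_dim_control {X : Type} (d : X -> X -> R) (f : R -> R) : Prop :=
  forall s, 0 < s -> forall x y, scale_chain d s x y -> d x y <= f s.

(* Only the value f 2 matters: fix K >= f 2 and n with (2n+1)^K < 2^n.
   - Local finiteness and infinitude give an independent list T of n
     elements (none lies in the subgroup generated by the later ones), so
     the 2^n subset products of T are pairwise distinct elements of <T>.
   - Using an enumeration of G, choose a symmetric weight w : G -> nat with
     w = 1 on T, w > K off T u T^-1, and finitely many elements of each
     bounded weight. The weighted word length of w yields a proper left
     invariant metric d (d(g,h) = length of g^-1 h).
   - Elements of length <= K are products of at most K letters from
     T u T^-1 u {1}, so there are at most (2n+1)^K < 2^n of them: some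
     x in <T> has d(1,x) > K >= f 2.
   - Each generator in T is at distance 1 < 2 from the identity, so by left
     invariance all of <T> lies in the 2-scale component of 1; hence that
     component has diameter > f 2 and f is not a control function. *)

From Stdlib Require Import Reals List Lia Arith Lra Wf_nat Classical ClassicalEpsilon.
Open Scope R_scope.

Section GroupFacts.
Variable G : Group.

Lemma ginv_unique (a b : G) : gmul G a b = gone G -> b = ginv G a.
Proof.
  intro H. rewrite <- (gmul_1l G b), <- (gmul_Vl G a), <- gmul_assoc, H, gmul_1r.
  reflexivity.
Qed.

Lemma ginv_mul (a b : G) : ginv G (gmul G a b) = gmul G (ginv G b) (ginv G a).
Proof.
  symmetry. apply ginv_unique.
  rewrite gmul_assoc, <- (gmul_assoc G a b), gmul_Vr, gmul_1r, gmul_Vr. reflexivity.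
Qed.

Lemma ginv_involutive (a : G) : ginv G (ginv G a) = a.
Proof. symmetry. apply ginv_unique, gmul_Vl. Qed.

Lemma ginv_one : ginv G (gone G) = gone G.
Proof. symmetry. apply ginv_unique, gmul_1l. Qed.

Lemma gmul_ginv_cancel (a b : G) : gmul G (ginv G a) (gmul G a b) = b.
Proof. rewrite gmul_assoc, gmul_Vl, gmul_1l. reflexivity. Qed.

Lemma gmul_cancel_ginv (a b : G) : gmul G a (gmul G (ginv G a) b) = b.
Proof. rewrite gmul_assoc, gmul_Vr, gmul_1l. reflexivity. Qed.

Fixpoint prod (ws : list G) : G :=
  match ws with nil => gone G | a :: r => gmul G a (prod r) end.

Lemma prod_app (a b : list G) : prod (a ++ b) = gmul G (prod a) (prod b).
Proof. induction a; simpl. - now rewrite gmul_1l. - now rewrite IHa, gmul_assoc. Qed.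

Lemma prod_inverse_word (a : list G) : prod (rev (map (ginv G) a)) = ginv G (prod a).
Proof.
  induction a; simpl.
  - now rewrite ginv_one.
  - rewrite prod_app, IHa, ginv_mul. simpl. now rewrite gmul_1r.
Qed.

Fixpoint words (B : list G) (k : nat) : list (list G) :=
  match k with
  | O => nil :: nil
  | S k => flat_map (fun ws => map (fun b => b :: ws) B) (words B k)
  end.

Lemma words_length (B : list G) k : length (words B k) = (length B ^ k)%nat.
Proof.
  induction k; simpl; auto.
  rewrite (flat_map_constant_length (c := length B)), IHk; [lia|].
  intros. apply length_map.
Qed.

Lemma words_pad (B : list G) (H1 : In (gone G) B) k : forall ws,
  (forall a, In a ws -> In a B) -> (length ws <= k)%nat ->
  exists ws', In ws' (words B k) /\ prod ws' = prod ws.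
Proof.
  induction k; intros ws HB Hl.
  - destruct ws; simpl in *; [|lia]. exists nil; simpl; auto.
  - destruct ws as [|a r].
    + destruct (IHk nil) as [w0 [Hw0 Hp]]; [simpl; tauto | simpl; lia |].
      exists (gone G :: w0). split.
      * apply in_flat_map. exists w0. split; auto. apply in_map_iff. now exists (gone G).
      * simpl. now rewrite gmul_1l.
    + destruct (IHk r) as [w0 [Hw0 Hp]]; [intros; apply HB; simpl; auto | simpl in Hl; lia |].
      exists (a :: w0). split.
      * apply in_flat_map. exists w0. split; auto.
        apply in_map_iff. exists a. split; auto. apply HB. simpl; auto.
      * simpl. now rewrite Hp.
Qed.

End GroupFacts.

Arguments prod {G}.
Arguments words {G}.

Section WeightedWordMetric.
Variable G : Group.
Variable w : G -> nat.
Hypothesis w_pos : forall g, (1 <= w g)%nat.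
Hypothesis w_inv : forall g, w (ginv G g) = w g.

Fixpoint weight (ws : list G) : nat :=
  match ws with nil => 0%nat | a :: r => (w a + weight r)%nat end.

Lemma weight_app (a b : list G) : weight (a ++ b) = (weight a + weight b)%nat.
Proof. induction a; simpl; lia. Qed.

Lemma weight_inverse_word (a : list G) : weight (rev (map (ginv G) a)) = weight a.
Proof. induction a; simpl; auto. rewrite weight_app, IHa. simpl. rewrite w_inv. lia. Qed.

Lemma length_le_weight (ws : list G) : (length ws <= weight ws)%nat.
Proof. induction ws; simpl; auto. specialize (w_pos a). lia. Qed.

Lemma letter_weight_le (ws : list G) a : In a ws -> (w a <= weight ws)%nat.
Proof. induction ws; simpl; [tauto|]. intros [->|H]; [lia|]. specialize (IHws H). lia. Qed.

Definition represents_with_weight (x : G) (k : nat) : Prop :=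
  exists ws, prod ws = x /\ weight ws = k.

Definition word_length (x : G) : nat :=
  epsilon (inhabits 0%nat)
    (fun k => represents_with_weight x k /\ forall j, represents_with_weight x j -> (k <= j)%nat).

Lemma word_length_spec x :
  represents_with_weight x (word_length x) /\
  forall j, represents_with_weight x j -> (word_length x <= j)%nat.
Proof.
  unfold word_length. apply epsilon_spec.
  destruct (dec_inh_nat_subset_has_unique_least_element (represents_with_weight x))
    as [k [Hk _]].
  - intro; apply classic.
  - exists (w x + 0)%nat, (x :: nil). simpl. now rewrite gmul_1r.
  - exists k. exact Hk.
Qed.

Lemma word_length_minimal x ws : prod ws = x -> (word_length x <= weight ws)%nat.
Proof. intro H. apply (proj2 (word_length_spec x)). now exists ws. Qed.

Lemma word_length_letter x : (word_length x <= w x)%nat.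
Proof.
  replace (w x) with (weight (x :: nil)) by (simpl; lia).
  apply word_length_minimal. simpl. apply gmul_1r.
Qed.

Lemma word_length_inv x : (word_length (ginv G x) <= word_length x)%nat.
Proof.
  destruct (proj1 (word_length_spec x)) as [ws [<- <-]].
  rewrite <- weight_inverse_word. apply word_length_minimal, prod_inverse_word.
Qed.

Lemma word_length_mul x y : (word_length (gmul G x y) <= word_length x + word_length y)%nat.
Proof.
  destruct (proj1 (word_length_spec x)) as [ws [Hx <-]].
  destruct (proj1 (word_length_spec y)) as [vs [Hy <-]].
  rewrite <- weight_app. apply word_length_minimal. now rewrite prod_app, Hx, Hy.
Qed.

Lemma word_length_zero x : word_length x = 0%nat <-> x = gone G.
Proof.
  split.
  - destruct (proj1 (word_length_spec x)) as [[|a r] [<- Hw]]; simpl in *; auto.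
    specialize (w_pos a). lia.
  - intros ->. pose proof (word_length_minimal (gone G) nil eq_refl). simpl in *. lia.
Qed.

Lemma short_elements_enumerated (B : list G) (k : nat) x :
  (forall g, (w g <= k)%nat -> In g B) -> (word_length x <= k)%nat ->
  In x (map prod (words (gone G :: B) k)).
Proof.
  intros HB Hx.
  destruct (proj1 (word_length_spec x)) as [ws [Hws Hwt]].
  destruct (words_pad G (gone G :: B) (or_introl eq_refl) k ws) as [ws' [Hin Hp]].
  - intros a Ha. right. apply HB. pose proof (letter_weight_le ws a Ha). lia.
  - pose proof (length_le_weight ws). lia.
  - apply in_map_iff. exists ws'. split; congruence.
Qed.

Definition word_metric (g h : G) : R := INR (word_length (gmul G (ginv G g) h)).

Lemma word_metric_from_one x : word_metric (gone G) x = INR (word_length x).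
Proof. unfold word_metric. now rewrite ginv_one, gmul_1l. Qed.

Lemma word_metric_is_metric : is_metric word_metric.
Proof.
  unfold word_metric. split; [|split; [|split]].
  - intros; apply pos_INR.
  - intros x y. change 0 with (INR 0). split.
    + intro H. apply INR_eq, word_length_zero in H.
      now rewrite <- (gmul_cancel_ginv G x y), H, gmul_1r.
    + intros ->. rewrite gmul_Vl. f_equal. now apply word_length_zero.
  - assert (Hswap : forall x y, gmul G (ginv G x) y = ginv G (gmul G (ginv G y) x))
      by (intros; now rewrite ginv_mul, ginv_involutive).
    intros x y. f_equal. apply Nat.le_antisymm; rewrite Hswap; apply word_length_inv.
  - intros x y z. rewrite <- plus_INR. apply le_INR.
    replace (gmul G (ginv G x) z)
      with (gmul G (gmul G (ginv G x) y) (gmul G (ginv G y) z))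
      by (now rewrite <- gmul_assoc, gmul_cancel_ginv).
    apply word_length_mul.
Qed.

Lemma word_metric_proper
  (w_finite : forall r, exists L, forall g, (w g <= r)%nat -> In g L) :
  proper_left_invariant_metric G word_metric.
Proof.
  split; [apply word_metric_is_metric | split].
  - intros g h k. unfold word_metric. now rewrite ginv_mul, <- gmul_assoc, gmul_ginv_cancel.
  - intros x r. destruct (INR_unbounded r) as [N HN]. destruct (w_finite N) as [L HL].
    exists (map (gmul G x) (map prod (words (gone G :: L) N))).
    intros y Hy. apply in_map_iff. exists (gmul G (ginv G x) y).
    split; [apply gmul_cancel_ginv|].
    apply short_elements_enumerated; auto.
    apply INR_le. unfold word_metric in Hy. lra.
Qed.

End WeightedWordMetric.

Lemma separating_weight_exists (G : Group) (e : nat -> G) (e_onto : forall x, exists n, e n = x)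
  (A : list G) (K : nat) :
  exists w : G -> nat,
    (forall g, (1 <= w g)%nat) /\
    (forall g, w (ginv G g) = w g) /\
    (forall r, exists L, forall g, (w g <= r)%nat -> In g L) /\
    (forall g, In g A -> w g = 1%nat) /\
    (forall g, (w g <= K)%nat -> In g (A ++ map (ginv G) A)).
Proof.
  set (idx g := epsilon (inhabits 0%nat) (fun n => e n = g)).
  assert (Hidx : forall g, e (idx g) = g) by (intro g; apply epsilon_spec, e_onto).
  set (near g := In g A \/ In (ginv G g) A).
  exists (fun g => if excluded_middle_informative (near g) then 1%nat
                   else (S K + idx g + idx (ginv G g))%nat).
  assert (Hnear_inv : forall g, near (ginv G g) <-> near g)
    by (intro g; unfold near; rewrite ginv_involutive; tauto).
  split; [|split; [|split; [|split]]].
  - intro g. destruct excluded_middle_informative; lia.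
  - intro g. rewrite ginv_involutive.
    destruct (excluded_middle_informative (near g)) as [H|H],
      (excluded_middle_informative (near (ginv G g))) as [H'|H']; try lia.
    + exfalso. now apply H', Hnear_inv.
    + exfalso. now apply H, Hnear_inv.
  - intro r. exists (A ++ map (ginv G) A ++ map e (seq 0 (S r))). intros g Hg.
    destruct excluded_middle_informative as [[Hg'|Hg']|]; apply in_or_app.
    + now left.
    + right. apply in_or_app. left. rewrite <- (ginv_involutive G g). now apply in_map.
    + right. apply in_or_app. right. rewrite <- (Hidx g). apply in_map, in_seq. lia.
  - intros g Hg. destruct excluded_middle_informative as [|Hn]; auto.
    exfalso. apply Hn. now left.
  - intros g Hg. destruct excluded_middle_informative as [[Hg'|Hg']|]; [| |lia]; apply in_or_app.
    + now left.
    + right. rewrite <- (ginv_involutive G g). now apply in_map.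
Qed.

Section IndependentLists.
Variable G : Group.

Lemma gen_incl (S S' : list G) x : incl S S' -> gen G S x -> gen G S' x.
Proof.
  intros H Hg. induction Hg.
  - apply gen_in; auto.
  - apply gen_one.
  - apply gen_mul; auto.
  - apply gen_inv; auto.
Qed.

Fixpoint independent (l : list G) : Prop :=
  match l with nil => True | h :: t => ~ gen G t h /\ independent t end.

Fixpoint subword_products (l : list G) : list G :=
  match l with
  | nil => gone G :: nil
  | h :: t => subword_products t ++ map (fun p => gmul G p h) (subword_products t)
  end.

Lemma subword_products_length l : length (subword_products l) = (2 ^ length l)%nat.
Proof. induction l; simpl; auto. rewrite length_app, length_map, IHl. lia. Qed.

Lemma subword_products_in_gen l p : In p (subword_products l) -> gen G l p.
Proof.
  revert p; induction l as [|a l IHl]; simpl; intros p Hp.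
  - destruct Hp as [<-|[]]. apply gen_one.
  - apply in_app_or in Hp as [Hp|Hp].
    + apply (gen_incl l); auto. apply incl_tl, incl_refl.
    + apply in_map_iff in Hp as [q [<- Hq]]. apply gen_mul.
      * apply (gen_incl l); auto. apply incl_tl, incl_refl.
      * apply gen_in. simpl; auto.
Qed.

Lemma subword_products_NoDup l : independent l -> NoDup (subword_products l).
Proof.
  induction l as [|a l IHl]; simpl; intros Hind.
  - repeat constructor. auto.
  - destruct Hind as [Ha Hl]. apply NoDup_app; auto.
    + apply NoDup_map_NoDup_ForallPairs; auto. intros x y _ _ E.
      rewrite <- (gmul_1r G x), <- (gmul_1r G y), <- (gmul_Vr G a), !gmul_assoc, E.
      reflexivity.
    + (* x = q a with x, q in <l> would put a in <l> *)
      intros x Hx Hy. apply in_map_iff in Hy as [q [E Hq]]. apply Ha.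
      replace a with (gmul G (ginv G q) x) by (rewrite <- E; apply gmul_ginv_cancel).
      apply gen_mul; [apply gen_inv|]; apply subword_products_in_gen; auto.
Qed.

(* In an infinite locally finite group, independent lists of every length
   exist: a finite subgroup never exhausts the group. *)
Lemma independent_list_exists (HG : countably_infinite G) (Hlf : locally_finite G) n :
  exists T, length T = n /\ independent T.
Proof.
  assert (outside : forall L : list G, exists g, ~ In g L).
  { destruct HG as [e [e_inj _]]. intro L. apply NNPP. intro Hall.
    assert (Hincl : incl (map e (seq 0 (S (length L)))) L).
    { intros x _. apply NNPP. intro Hx. apply Hall. now exists x. }
    apply NoDup_incl_length in Hincl.
    - rewrite length_map, length_seq in Hincl. lia.
    - apply NoDup_map_NoDup_ForallPairs; [intros x y _ _; apply e_inj | apply seq_NoDup]. }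
  induction n as [|n [T [HTn HT]]].
  - now exists nil.
  - destruct (Hlf T) as [L HL]. destruct (outside L) as [g Hg].
    exists (g :: T). simpl. split; [lia|]. split; auto.
Qed.

Lemma long_element_in_span (w : G -> nat) (w_pos : forall g, (1 <= w g)%nat)
  (T B : list G) (K : nat) :
  independent T -> (forall g, (w g <= K)%nat -> In g B) ->
  (S (length B) ^ K < 2 ^ length T)%nat ->
  exists x, gen G T x /\ (K < word_length G w x)%nat.
Proof.
  intros HT HB Hcount. apply NNPP. intro Hnone.
  assert (Hincl : incl (subword_products T) (map prod (words (gone G :: B) K))).
  { intros p Hp. apply (short_elements_enumerated G w w_pos); auto.
    apply Nat.nlt_ge. intro Hlong. apply Hnone. exists p.
    split; auto. now apply subword_products_in_gen. }
  apply NoDup_incl_length in Hincl; [|now apply subword_products_NoDup].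
  rewrite subword_products_length, length_map, words_length in Hincl. simpl in Hincl. lia.
Qed.

End IndependentLists.

Lemma chain_trans {X} (d : X -> X -> R) s a b c :
  scale_chain d s a b -> scale_chain d s b c -> scale_chain d s a c.
Proof. intro H; induction H; auto. intro. econstructor; eauto. Qed.

Lemma chain_sym {X} (d : X -> X -> R) s (d_sym : forall x y, d x y = d y x) a b :
  scale_chain d s a b -> scale_chain d s b a.
Proof.
  intro H; induction H; [constructor|].
  apply (chain_trans d s _ y); auto. econstructor; [rewrite d_sym; eauto | constructor].
Qed.

Lemma chain_translate (G : Group) (d : G -> G -> R) s
  (d_inv : forall g h k, d (gmul G g h) (gmul G g k) = d h k) g a b :
  scale_chain d s a b -> scale_chain d s (gmul G g a) (gmul G g b).
Proof. intro H; induction H; [constructor|]. econstructor; eauto. now rewrite d_inv. Qed.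

Lemma gen_in_scale_component (G : Group) (d : G -> G -> R) s
  (d_sym : forall x y, d x y = d y x)
  (d_inv : forall g h k, d (gmul G g h) (gmul G g k) = d h k)
  (S : list G) (HS : forall t, In t S -> d (gone G) t < s) :
  forall y, gen G S y -> scale_chain d s (gone G) y.
Proof.
  intros y Hy. induction Hy as [t Ht| |x y _ IHx _ IHy|x _ IHx].
  - apply (chain_step d s _ t); [apply HS; auto | constructor].
  - constructor.
  - apply (chain_trans _ _ _ x); auto.
    pose proof (chain_translate G d s d_inv x _ _ IHy) as Hxy.
    now rewrite gmul_1r in Hxy.
  - apply (chain_sym _ _ d_sym).
    pose proof (chain_translate G d s d_inv (ginv G x) _ _ IHx) as Hx.
    now rewrite gmul_1r, gmul_Vl in Hx.
Qed.

Lemma polynomial_below_exponential K : exists n, ((2 * n + 1) ^ K < 2 ^ n)%nat.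
Proof.
  set (c := (K * K + K)%nat). set (a := (K + c)%nat). exists (2 ^ a)%nat.
  assert (H1 : (2 * 2 ^ a + 1 <= 2 ^ (a + 2))%nat).
  { rewrite Nat.pow_add_r. simpl. pose proof (Nat.pow_gt_lin_r 2 a). lia. }
  assert (H2 : ((a + 2) * K < 2 ^ a)%nat).
  { unfold a. rewrite Nat.pow_add_r.
    pose proof (Nat.pow_gt_lin_r 2 K ltac:(lia)). pose proof (Nat.pow_gt_lin_r 2 c ltac:(lia)).
    assert ((K + 1) * (c + 1) <= 2 ^ K * 2 ^ c)%nat by (apply Nat.mul_le_mono; lia).
    unfold c in *. nia. }
  eapply Nat.le_lt_trans; [apply Nat.pow_le_mono_l; exact H1|].
  rewrite <- Nat.pow_mul_r. apply Nat.pow_lt_mono_r; lia.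
Qed.

Theorem mainTheorem11 (G : Group)
  (HG : countably_infinite G) (Hlf : locally_finite G)
  (f : R -> R)
  (Hpos : forall x, 0 <= x -> 0 <= f x)
  (Hmono : forall x y, 0 <= x -> x <= y -> f x <= f y)
  (Hlim : forall M, exists N, forall x, N <= x -> M <= f x) :
  exists d : G -> G -> R,
    proper_left_invariant_metric G d /\ ~ zero_dim_control d f.
Proof.
  destruct (INR_unbounded (f 2)) as [K HK].
  destruct (polynomial_below_exponential K) as [n Hn].
  destruct (independent_list_exists G HG Hlf n) as [T [HTn HT]].
  destruct HG as [e [_ e_onto]].
  destruct (separating_weight_exists G e e_onto T K)
    as [w [w_pos [w_inv [w_finite [w_T w_far]]]]].
  pose proof (word_metric_proper G w w_pos w_inv w_finite) as Hmetric.
  exists (word_metric G w). split; [exact Hmetric|].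
  destruct Hmetric as [[_ [_ [d_sym _]]] [d_inv _]].
  destruct (long_element_in_span G w w_pos T (T ++ map (ginv G) T) K HT w_far)
    as [x [Hx Hlong]].
  { rewrite length_app, length_map, HTn. now replace (S (n + n)) with (2 * n + 1)%nat by lia. }
  assert (Hchain : scale_chain (word_metric G w) 2 (gone G) x).
  { apply (gen_in_scale_component G _ 2 d_sym d_inv T); auto.
    intros t Ht. rewrite word_metric_from_one.
    pose proof (le_INR _ _ (word_length_letter G w t)) as Hle.
    rewrite (w_T t Ht) in Hle. simpl in Hle. lra. }
  intro Hcontrol. specialize (Hcontrol 2 ltac:(lra) _ _ Hchain).
  rewrite word_metric_from_one in Hcontrol. apply lt_INR in Hlong. lra.
Qed.
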